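(* Let $X$ be a $T_1$ topological space. An element $f\in T''(X)$ is a unit of the ring $T''(X)$ if and only if $Z(f)=\{x\in X: f(x)=0\}=\emptyset$.
   Context: $C(X)$ is the ring of real-valued continuous functions on $X$; a cozero set is a set $\{x: g(x)\neq 0\}$ with $g\in C(X)$. $T''(X)$ is the ring (under pointwise operations) of all functions $f\colon X\to\mathbb{R}$ for which there is a dense cozero set $U$ of $X$ with $f|_U$ continuous. *)

From HB Require Import structures.
From mathcomp Require Import all_boot all_order all_algebra.
From mathcomp Require Import all_classical all_reals all_analysis.
From mathcomp Require Import Rstruct Rstruct_topology.
From Stdlib Require Import Reals.
Set Implicit Arguments. Unset Strict Implicit. Unset Printing Implicit Defensive.
Import Order.TTheory GRing.Theory Num.Theory.
Local Open Scope classical_set_scope.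
Local Open Scope ring_scope.

Definition cozero_set (X : topologicalType) (U : set X) : Prop :=
  exists g : X -> Rdefinitions.R, continuous g /\ U = [set x | g x != 0].

Definition Tpp (X : topologicalType) (f : X -> Rdefinitions.R) : Prop :=
  exists U : set X, cozero_set U /\ dense U /\ {within U, continuous f}.

Definition Tpp_unit (X : topologicalType) (f : X -> Rdefinitions.R) : Prop :=
  exists g : X -> Rdefinitions.R, Tpp g /\ (forall x, f x * g x = 1).

Definition zero_set (X : Type) (f : X -> Rdefinitions.R) : set X :=
  [set x | f x = 0].

From mathcomp Require Import all_boot all_order all_algebra.
From mathcomp Require Import all_classical all_reals all_analysis.
From mathcomp Require Import Rstruct Rstruct_topology.
Import GRing.Theory Num.Theory numFieldNormedType.Exports.
Local Open Scope classical_set_scope.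
Local Open Scope ring_scope.

(* If f g = 1 pointwise then f vanishes nowhere. Conversely, if f vanishes
   nowhere then 1/f is continuous wherever f is, so 1/f is continuous on the
   same dense cozero set as f and lies in T''(X). *)

Lemma zero_set0P (T : Type) (f : T -> Rdefinitions.R) :
  zero_set f = set0 <-> forall x, f x != 0.
Proof.
split=> [Zf0 x | fn0].
- by apply/eqP => fx0; have : zero_set f x by []; rewrite Zf0.
- by apply/seteqP; split=> x //= /eqP; rewrite (negbTE (fn0 x)).
Qed.

Lemma zero_set0_of_rinv (T : Type) (f g : T -> Rdefinitions.R) :
  (forall x, f x * g x = 1) -> zero_set f = set0.
Proof.
move=> fg1; apply/zero_set0P => x; apply/eqP => fx0.
by have /eqP := fg1 x; rewrite fx0 mul0r eq_sym oner_eq0.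
Qed.

Lemma within_continuousV (K : numFieldType) (X : topologicalType) (U : set X)
    (f : X -> K) :
  (forall x, f x != 0) -> {within U, continuous f} ->
  {within U, continuous (fun x => (f x)^-1)}.
Proof.
move=> fn0 cf x.
exact: (@continuousV _ (subspace U) (from_subspace U f) x (fn0 x) (cf x)).
Qed.

Lemma Tpp_inv (X : topologicalType) (f : X -> Rdefinitions.R) :
  Tpp f -> (forall x, f x != 0) -> Tpp (fun x => (f x)^-1).
Proof.
move=> [U [cozU [denseU cf]]] fn0.
by exists U; split; [|split; [|exact: within_continuousV]].
Qed.

Theorem theorem2p3 (X : topologicalType) (hT1 : accessible_space X)
  (f : X -> Rdefinitions.R) (hf : Tpp f) :
  Tpp_unit f <-> zero_set f = set0.
Proof.
split=> [[g [_ fg1]] | /zero_set0P fn0].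
- exact: zero_set0_of_rinv fg1.
- exists (fun x => (f x)^-1); split; first exact: Tpp_inv.
  by move=> x; rewrite mulfV.
Qed.
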